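(* For every $q>1$, \[ \phi(q)=\frac{1-1/q}{\ln 2}+\sum_{k=1}^\infty\frac1k\log_2\!\left(\frac{k+\frac{1}{q-1}+1}{k+\frac{1}{q-1}}\right),\qquad \rho(q)=\zeta\!\left(2,\tfrac{q}{q-1}\right)=\sum_{k=0}^\infty\frac{1}{\left(k+\frac{q}{q-1}\right)^2}, \] where $\zeta(s,t)=\sum_{k\ge0}(k+t)^{-s}$ is the Hurwitz zeta function.
   Context: For $q>1$ define $\phi(q)=\int_{-\infty}^\infty -\big(e^{-e^r}-e^{-qe^r}\big)\log_2\big(e^{-e^r}-e^{-qe^r}\big)\,dr$ and $\rho(q)=\int_{-\infty}^\infty \frac{\left(-e^re^{-e^r}+qe^re^{-qe^r}\right)^2}{e^{-e^r}-e^{-qe^r}}\,dr$. *)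

From Stdlib Require Import Reals.
From Coquelicot Require Import Coquelicot.
Open Scope R_scope.

Definition log2 (x : R) : R := ln x / ln 2.

Definition gq (q r : R) : R := exp (- exp r) - exp (- (q * exp r)).

Definition phi_integrand (q r : R) : R := - (gq q r) * log2 (gq q r).

Definition rho_integrand (q r : R) : R :=
  (- (exp r * exp (- exp r)) + q * exp r * exp (- (q * exp r))) ^ 2 / gq q r.

Definition hurwitz_zeta (s t : R) : R := Series (fun k : nat => / Rpower (INR k + t) s).

(* Substituting x = e^r, write E = e^{-x}, c = q - 1 and u = e^{-c x} in (0, 1),
   so that gq q r = E (1 - u) and
     phi_integrand = E (1 - u) (x - ln (1 - u)) / ln 2,
     rho_integrand = x^2 E (1 - q u)^2 / (1 - u).
   Expanding -ln (1 - u) = sum u^(k+1)/(k+1) and 1/(1 - u) = sum u^k writes both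
   integrands as sums of terms x^m e^{-a x}, whose integrals over the line are
   elementary: int x e^{-a x} dr = 1/a, int x^2 e^{-a x} dr = 1/a^2, and
   Frullani's int (e^{-a x} - e^{-b x}) dr = ln b - ln a.  Summing termwise gives
   the two series of the statement; the rho series is zeta(2, q/(q-1)). *)

From Stdlib Require Import Reals Lra Lia Psatz FunctionalExtensionality.
From Coquelicot Require Import Coquelicot.
Open Scope R_scope.

Notation is_RInt_line f l :=
  (is_RInt_gen f (Rbar_locally m_infty) (Rbar_locally p_infty) l).

Lemma exp_le_compat (x y : R) : x <= y -> exp x <= exp y.
Proof. intros [H|H]; [now apply Rlt_le, exp_increasing | subst; apply Rle_refl]. Qed.

Lemma ex_RInt_continuous_R (f : R -> R) (a b : R) :
  (forall x, continuous f x) -> ex_RInt f a b.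
Proof. intros Hf; apply (ex_RInt_continuous (V:=R_CompleteNormedModule)); auto. Qed.

Lemma continuous_of_ex_derive (f : R -> R) (x : R) : ex_derive f x -> continuous f x.
Proof. apply (ex_derive_continuous (K:=R_AbsRing) (V:=R_NormedModule)). Qed.

Lemma is_RInt_line_iff (f : R -> R) (L : R) : (forall x, continuous f x) ->
  is_RInt_line f L <->
  (forall eps, 0 < eps -> exists M, forall a b, a < - M -> M < b ->
     Rabs (RInt f a b - L) < eps).
Proof.
  intros Hf. split.
  - intros H eps Heps.
    destruct (H (fun y => Rabs (y - L) < eps)) as [Q Q' [M1 HQ] [M2 HQ'] HQQ'].
    { exists (mkposreal eps Heps). intros y Hy. exact Hy. }
    exists (Rabs M1 + Rabs M2). intros a b Ha Hb.
    destruct (HQQ' a b) as [y [Hy Hyl]].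
    + apply HQ. pose proof (Rle_abs (- M1)); rewrite Rabs_Ropp in *; pose proof (Rabs_pos M2); lra.
    + apply HQ'. pose proof (Rle_abs M2); pose proof (Rabs_pos M1); lra.
    + simpl in Hy. apply (is_RInt_unique (V:=R_CompleteNormedModule)) in Hy. now rewrite Hy.
  - intros H P [eps HP].
    destruct (H eps (cond_pos eps)) as [M HM].
    apply (Filter_prod _ _ _ (fun a => a < - M) (fun b => M < b)).
    + now exists (- M).
    + now exists M.
    + intros a b Ha Hb. exists (RInt f a b). split.
      * apply (RInt_correct (V:=R_CompleteNormedModule)), ex_RInt_continuous_R, Hf.
      * apply HP. now apply HM.
Qed.

Lemma RInt_le_RInt_larger (f : R -> R) (a b a' b' : R) :
  (forall x, continuous f x) -> (forall x, 0 <= f x) ->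
  a' <= a -> a <= b -> b <= b' -> RInt f a b <= RInt f a' b'.
Proof.
  intros Hf Hpos Ha Hab Hb.
  assert (Hex : forall u v, ex_RInt f u v) by (intros; apply ex_RInt_continuous_R, Hf).
  rewrite <- (RInt_Chasles f a' a b'), <- (RInt_Chasles f a b b') by auto.
  assert (0 <= RInt f a' a) by (apply RInt_ge_0; auto).
  assert (0 <= RInt f b b') by (apply RInt_ge_0; auto).
  unfold plus; simpl; lra.
Qed.

Lemma RInt_le_is_RInt_line (f : R -> R) (L a b : R) :
  (forall x, continuous f x) -> (forall x, 0 <= f x) -> is_RInt_line f L ->
  a <= b -> RInt f a b <= L.
Proof.
  intros Hf Hpos HL Hab. apply le_epsilon. intros eps Heps.
  destruct (proj1 (is_RInt_line_iff f L Hf) HL eps Heps) as [M HM].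
  set (a' := Rmin a (- Rabs M - 1)). set (b' := Rmax b (Rabs M + 1)).
  assert (a' <= a) by apply Rmin_l. assert (b <= b') by apply Rmax_l.
  assert (a' < - M).
  { pose proof (Rmin_r a (- Rabs M - 1)). pose proof (Rle_abs M). unfold a'. lra. }
  assert (M < b') by (pose proof (Rmax_r b (Rabs M + 1)); pose proof (Rle_abs M); unfold b'; lra).
  pose proof (RInt_le_RInt_larger f a b a' b' Hf Hpos ltac:(lra) Hab ltac:(lra)).
  pose proof (HM a' b' ltac:(lra) ltac:(lra)) as Hclose. apply Rabs_def2 in Hclose. lra.
Qed.

Lemma is_RInt_line_dominated_approx (f : R -> R) (g h : nat -> R -> R)
  (L d : nat -> R) (l : R) :
  (forall x, continuous f x) ->
  (forall N x, continuous (g N) x) -> (forall N x, continuous (h N) x) ->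
  (forall N, is_RInt_line (g N) (L N)) -> (forall N, is_RInt_line (h N) (d N)) ->
  (forall N x, 0 <= f x - g N x <= h N x) ->
  is_lim_seq L l -> is_lim_seq d 0 -> is_RInt_line f l.
Proof.
  intros Hf Hg Hh HgL Hhd Hsq HL Hd.
  apply is_RInt_line_iff; auto. intros eps Heps.
  apply is_lim_seq_spec in HL. destruct (HL (mkposreal (eps / 3) ltac:(lra))) as [N1 HN1].
  apply is_lim_seq_spec in Hd. destruct (Hd (mkposreal (eps / 3) ltac:(lra))) as [N2 HN2].
  simpl in HN1, HN2. set (N := max N1 N2).
  specialize (HN1 N ltac:(lia)). specialize (HN2 N ltac:(lia)).
  destruct (proj1 (is_RInt_line_iff _ _ (Hg N)) (HgL N) (eps / 3) ltac:(lra)) as [M HM].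
  exists (Rabs M). intros a b Ha Hb. pose proof (Rle_abs M). pose proof (Rabs_pos M).
  specialize (HM a b ltac:(lra) ltac:(lra)).
  assert (Hex : forall k : R -> R, (forall x, continuous k x) -> ex_RInt k a b)
    by (intros; apply ex_RInt_continuous_R; auto).
  assert (Hrem : 0 <= RInt f a b - RInt (g N) a b <= d N).
  { split.
    - assert (RInt (g N) a b <= RInt f a b).
      { apply RInt_le; auto; try lra. intros x _; specialize (Hsq N x); lra. }
      lra.
    - apply Rle_trans with (RInt (h N) a b).
      + cut (RInt f a b <= RInt (fun x => g N x + h N x) a b).
        { rewrite (RInt_plus (V:=R_CompleteNormedModule)) by auto. unfold plus; simpl; lra. }
        apply RInt_le; auto; try lra.
        * apply Hex. intros x; apply (continuous_plus (V:=R_NormedModule)); auto.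
        * intros x _; specialize (Hsq N x); lra.
      + apply RInt_le_is_RInt_line; auto; try lra. intros x; specialize (Hsq N x); lra. }
  apply Rabs_def2 in HN1; apply Rabs_def2 in HN2; apply Rabs_def2 in HM.
  apply Rabs_def1; lra.
Qed.

Lemma is_RInt_line_monotone_approx (f : R -> R) (g : nat -> R -> R)
  (L d : nat -> R) (l : R) :
  (forall x, continuous f x) -> (forall N x, continuous (g N) x) ->
  (forall N, is_RInt_line (g N) (L N)) ->
  (forall N x, 0 <= g N x <= f x) -> (forall N x, f x <= g N x + d N) ->
  is_lim_seq L l -> is_lim_seq d 0 -> is_RInt_line f l.
Proof.
  intros Hf Hg HgL Hbelow Habove HL Hd.
  assert (Hex : forall a b, ex_RInt f a b) by (intros; apply ex_RInt_continuous_R; auto).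
  assert (Hup : forall a b, a <= b -> RInt f a b <= l).
  { intros a b Hab.
    assert (Hbound : forall N, RInt f a b <= L N + (b - a) * d N).
    { intros N. apply Rle_trans with (RInt (fun x => g N x + d N) a b).
      - apply RInt_le; auto. apply ex_RInt_continuous_R. intros x.
        apply (continuous_plus (V:=R_NormedModule)); auto. apply continuous_const.
      - rewrite (RInt_plus (V:=R_CompleteNormedModule)), (RInt_const (V:=R_CompleteNormedModule))
          by (apply ex_RInt_continuous_R; auto; intros; apply continuous_const).
        assert (RInt (g N) a b <= L N).
        { apply RInt_le_is_RInt_line; auto. intros x; apply Hbelow. }
        unfold scal, plus; simpl; unfold mult; simpl. lra. }
    assert (Hlim : is_lim_seq (fun N => L N + (b - a) * d N) (l + (b - a) * 0)).
    { apply (is_lim_seq_plus' _ _ l ((b - a) * 0)); auto. apply (is_lim_seq_scal_l d (b - a) 0 Hd). }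
    rewrite Rmult_0_r, Rplus_0_r in Hlim.
    apply (is_lim_seq_le (fun _ => RInt f a b) _ (RInt f a b) l Hbound); auto.
    apply is_lim_seq_const. }
  apply is_RInt_line_iff; auto. intros eps Heps.
  apply is_lim_seq_spec in HL. destruct (HL (mkposreal (eps / 2) ltac:(lra))) as [N HN].
  simpl in HN. specialize (HN N (le_n N)).
  destruct (proj1 (is_RInt_line_iff _ _ (Hg N)) (HgL N) (eps / 2) ltac:(lra)) as [M HM].
  exists (Rabs M). intros a b Ha Hb. pose proof (Rle_abs M). pose proof (Rabs_pos M).
  specialize (HM a b ltac:(lra) ltac:(lra)).
  assert (RInt (g N) a b <= RInt f a b).
  { apply RInt_le; auto; try lra. apply ex_RInt_continuous_R; auto. intros x _; apply Hbelow. }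
  specialize (Hup a b ltac:(lra)).
  apply Rabs_def2 in HN; apply Rabs_def2 in HM. apply Rabs_def1; lra.
Qed.

Lemma is_RInt_line_primitive (F f : R -> R) (la lb K : R) :
  (forall r, is_derive F r (f r)) -> (forall r, continuous f r) ->
  (forall r, Rabs (F r - la) <= K * exp r) ->
  (forall r, Rabs (F r - lb) <= K * exp (- r)) ->
  is_RInt_line f (lb - la).
Proof.
  intros HF Hf Hla Hlb. apply is_RInt_line_iff; auto. intros eps Heps.
  assert (HK : 0 <= K) by (specialize (Hla 0); pose proof (Rabs_pos (F 0 - la)); rewrite exp_0 in Hla; lra).
  set (t := eps / (2 * (K + 1))).
  assert (Ht : 0 < t) by (unfold t; apply Rdiv_lt_0_compat; lra).
  exists (Rabs (ln t)). intros a b Ha Hb.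
  assert (Hint : RInt f a b = F b - F a).
  { apply (is_RInt_unique (V:=R_CompleteNormedModule)).
    apply (is_RInt_derive (V:=R_CompleteNormedModule)); auto. }
  rewrite Hint.
  pose proof (Rle_abs (ln t)). pose proof (Rle_abs (- ln t)). rewrite Rabs_Ropp in *.
  assert (Ea : exp a <= t) by (rewrite <- (exp_ln t Ht); apply exp_le_compat; lra).
  assert (Eb : exp (- b) <= t) by (rewrite <- (exp_ln t Ht); apply exp_le_compat; lra).
  assert (HKt : K * t < eps / 2).
  { replace (K * t) with (eps / 2 * (K / (K + 1))) by (unfold t; field; lra).
    assert (K / (K + 1) < 1) by (apply Rlt_div_l; lra). nra. }
  specialize (Hla a); specialize (Hlb b).
  assert (K * exp a <= K * t) by (apply Rmult_le_compat_l; lra).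
  assert (K * exp (- b) <= K * t) by (apply Rmult_le_compat_l; lra).
  replace (F b - F a - (lb - la)) with ((F b - lb) - (F a - la)) by ring.
  eapply Rle_lt_trans; [apply Rabs_triang|]. rewrite Rabs_Ropp. lra.
Qed.

Lemma is_RInt_line_ext (f g : R -> R) (L L' : R) :
  (forall x, f x = g x) -> L = L' -> is_RInt_line f L -> is_RInt_line g L'.
Proof.
  intros Hfg <-. replace g with f; auto. now apply functional_extensionality.
Qed.

Lemma is_RInt_line_plus (f g : R -> R) (Lf Lg : R) :
  is_RInt_line f Lf -> is_RInt_line g Lg -> is_RInt_line (fun r => f r + g r) (Lf + Lg).
Proof. apply (is_RInt_gen_plus (V:=R_NormedModule)). Qed.

Lemma is_RInt_line_scal (f : R -> R) (k L : R) :
  is_RInt_line f L -> is_RInt_line (fun r => k * f r) (k * L).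
Proof. apply (is_RInt_gen_scal (V:=R_NormedModule)). Qed.

Lemma is_RInt_line_sum (F : nat -> R -> R) (L : nat -> R) (N : nat) :
  (forall k, is_RInt_line (F k) (L k)) ->
  is_RInt_line (fun r => sum_n (fun k => F k r) N) (sum_n L N).
Proof.
  intros HF. induction N as [|N IH].
  - apply (is_RInt_line_ext (F 0%nat) _ (L 0%nat)); [intros; now rewrite sum_O | now rewrite sum_O | auto].
  - eapply is_RInt_line_ext; [| | apply is_RInt_line_plus; [apply IH | apply (HF (S N))]].
    + intros; now rewrite sum_Sn.
    + now rewrite sum_Sn.
Qed.

Lemma exp_neg_bounds (y : R) : 0 <= y ->
  1 - y <= exp (- y) <= 1 /\ y * exp (- y) <= 1 /\ y ^ 2 * exp (- y) <= 4.
Proof.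
  intros Hy. pose proof (exp_ineq1_le (- y)). pose proof (exp_ineq1_le (y / 2)).
  assert (Hsq : exp y = exp (y / 2) * exp (y / 2)) by (rewrite <- exp_plus; f_equal; field).
  assert (Hpos : 0 < exp y) by apply exp_pos.
  rewrite exp_Ropp. split; [|split].
  - split; [rewrite <- exp_Ropp; lra|]. rewrite <- Rinv_1. apply Rinv_le_contravar; [lra|].
    rewrite <- exp_0. now apply exp_le_compat.
  - apply Rmult_le_reg_r with (exp y); auto. rewrite Rmult_assoc, Rinv_l by lra.
    pose proof (exp_ineq1_le y). lra.
  - apply Rmult_le_reg_r with (exp y); auto. rewrite Rmult_assoc, Rinv_l by lra. nra.
Qed.

Lemma RInt_near_const (h : R -> R) (l M a b : R) :
  (forall x, continuous h x) -> a <= b ->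
  (forall t, a <= t <= b -> Rabs (h t - l) <= M) ->
  Rabs (RInt h a b - (b - a) * l) <= (b - a) * M.
Proof.
  intros Hh Hab Hbound.
  assert (E : RInt (fun t => h t - l) a b = RInt h a b - (b - a) * l).
  { rewrite (RInt_minus (V:=R_CompleteNormedModule)), (RInt_const (V:=R_CompleteNormedModule))
      by (apply ex_RInt_continuous_R; auto; intros; apply continuous_const).
    reflexivity. }
  rewrite <- E. apply abs_RInt_le_const; auto.
  apply ex_RInt_continuous_R. intros x.
  apply (continuous_minus (V:=R_NormedModule)); auto. apply continuous_const.
Qed.

Lemma is_derive_RInt_window (h : R -> R) (A B t : R) : (forall x, continuous h x) ->
  is_derive (fun s => RInt h (s + A) (s + B)) t (h (t + B) - h (t + A)).
Proof.
  intros Hh. set (H := fun y => RInt h 0 y).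
  assert (HH : forall y, is_derive H y (h y)).
  { intros y. apply (is_derive_RInt h H 0); auto. apply filter_forall. intros z.
    apply (RInt_correct (V:=R_CompleteNormedModule)), ex_RInt_continuous_R, Hh. }
  apply (is_derive_ext (fun s => H (s + B) - H (s + A))).
  { intros s. unfold H. rewrite <- (RInt_Chasles h 0 (s + A) (s + B))
      by (apply ex_RInt_continuous_R, Hh). unfold plus; simpl; ring. }
  replace (h (t + B) - h (t + A)) with (1 * h (t + B) - 1 * h (t + A)) by ring.
  apply (is_derive_minus (K:=R_AbsRing) (V:=R_NormedModule)).
  - apply (is_derive_comp H (fun s => s + B)); [apply HH | auto_derive; auto; ring].
  - apply (is_derive_comp H (fun s => s + A)); [apply HH | auto_derive; auto; ring].
Qed.

(* If h tends to lm at -oo and to lp at +oo at exponential rates, then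
   h(r + A) - h(r + B) has integral (B - A) (lm - lp) over the line; the
   primitive is minus the integral of h over the window [r + A, r + B]. *)
Lemma is_RInt_line_window_difference (h : R -> R) (lm lp K A B : R) :
  (forall x, continuous h x) -> A <= B ->
  (forall t, Rabs (h t - lm) <= K * exp t) ->
  (forall t, Rabs (h t - lp) <= K * exp (- t)) ->
  is_RInt_line (fun r => h (r + A) - h (r + B)) ((B - A) * (lm - lp)).
Proof.
  intros Hh HAB Hm Hp.
  assert (HK : 0 <= K) by (specialize (Hm 0); rewrite exp_0 in Hm; pose proof (Rabs_pos (h 0 - lm)); lra).
  set (F := fun s => - RInt h (s + A) (s + B)).
  apply (is_RInt_line_ext (fun r => h (r + A) - h (r + B)) _ (- (B - A) * lp - - (B - A) * lm));
    [reflexivity | ring |].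
  apply (is_RInt_line_primitive F _ _ _ ((B - A) * K * (exp B + exp (- A)))).
  - intros r. unfold F.
    replace (h (r + A) - h (r + B)) with (- (h (r + B) - h (r + A))) by ring.
    apply (is_derive_opp (K:=R_AbsRing) (V:=R_NormedModule)), is_derive_RInt_window, Hh.
  - intros r. apply (continuous_minus (V:=R_NormedModule));
      apply (continuous_comp (fun r => r + _) h); auto; apply continuous_of_ex_derive; auto_derive; auto.
  - intros r. unfold F.
    replace (- RInt h (r + A) (r + B) - - (B - A) * lm)
      with (- (RInt h (r + A) (r + B) - ((r + B) - (r + A)) * lm)) by ring.
    rewrite Rabs_Ropp. eapply Rle_trans.
    + apply (RInt_near_const h lm (K * exp (r + B))); auto; [lra|].
      intros t Ht. eapply Rle_trans; [apply Hm|]. apply Rmult_le_compat_l; auto. apply exp_le_compat; lra.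
    + rewrite exp_plus. replace (r + B - (r + A)) with (B - A) by ring.
      assert (0 <= (B - A) * K * exp (- A) * exp r)
        by (pose proof (exp_pos (- A)); pose proof (exp_pos r); repeat apply Rmult_le_pos; lra).
      lra.
  - intros r. unfold F.
    replace (- RInt h (r + A) (r + B) - - (B - A) * lp)
      with (- (RInt h (r + A) (r + B) - ((r + B) - (r + A)) * lp)) by ring.
    rewrite Rabs_Ropp. eapply Rle_trans.
    + apply (RInt_near_const h lp (K * exp (- (r + A)))); auto; [lra|].
      intros t Ht. eapply Rle_trans; [apply Hp|]. apply Rmult_le_compat_l; auto. apply exp_le_compat; lra.
    + replace (- (r + A)) with (- A + - r) by ring. rewrite exp_plus.
      replace (r + B - (r + A)) with (B - A) by ring.
      assert (0 <= (B - A) * K * exp B * exp (- r))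
        by (pose proof (exp_pos B); pose proof (exp_pos (- r)); repeat apply Rmult_le_pos; lra).
      lra.
Qed.

Lemma is_RInt_line_frullani (al be : R) : 0 < al -> al <= be ->
  is_RInt_line (fun r => exp (- (al * exp r)) - exp (- (be * exp r))) (ln be - ln al).
Proof.
  intros Hal Hbe.
  set (h := fun t => exp (- exp t)).
  apply (is_RInt_line_ext (fun r => h (r + ln al) - h (r + ln be)) _ ((ln be - ln al) * (1 - 0))).
  - intros r. unfold h. rewrite !exp_plus, !exp_ln by lra. f_equal; f_equal; f_equal; ring.
  - ring.
  - apply (is_RInt_line_window_difference h 1 0 1).
    + intros x. apply continuous_of_ex_derive. unfold h. auto_derive. auto.
    + destruct (Rle_lt_or_eq_dec _ _ Hbe) as [Hlt|Heq]; [left; now apply ln_increasing | rewrite Heq; lra].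
    + intros t. pose proof (exp_neg_bounds (exp t) (Rlt_le _ _ (exp_pos t))). unfold h.
      rewrite Rabs_left1; lra.
    + intros t. pose proof (exp_neg_bounds (exp t) (Rlt_le _ _ (exp_pos t))) as [_ [Hb _]]. unfold h.
      rewrite Rminus_0_r, Rabs_pos_eq by (apply Rlt_le, exp_pos).
      rewrite Rmult_1_l, (exp_Ropp t). apply Rmult_le_reg_l with (exp t); [apply exp_pos|].
      rewrite Rinv_r by (apply Rgt_not_eq, exp_pos). lra.
Qed.

Lemma is_RInt_line_moment1 (a : R) : 0 < a ->
  is_RInt_line (fun r => exp r * exp (- (a * exp r))) (/ a).
Proof.
  intros Ha.
  apply (is_RInt_line_ext (fun r => exp r * exp (- (a * exp r))) _ (0 - - / a)); [reflexivity | ring |].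
  apply (is_RInt_line_primitive (fun r => - exp (- (a * exp r)) / a) _ _ _ (1 + / a ^ 2)).
  - intros r. auto_derive; auto. field. lra.
  - intros r. apply continuous_of_ex_derive. auto_derive. auto.
  - intros r. set (x := exp r). assert (Hx : 0 < x) by apply exp_pos.
    destruct (exp_neg_bounds (a * x)) as [[Hlow Hup] _]; [nra|].
    replace (- exp (- (a * x)) / a - - / a) with ((1 - exp (- (a * x))) / a) by (field; lra).
    assert (0 < / a ^ 2 * x) by (apply Rmult_lt_0_compat; [apply Rinv_0_lt_compat, pow_lt|]; lra).
    rewrite Rabs_pos_eq by (apply Rmult_le_pos; [lra | apply Rlt_le, Rinv_0_lt_compat; lra]).
    apply Rle_trans with x; [|lra]. apply Rle_div_l; lra.
  - intros r. set (x := exp r). assert (Hx : 0 < x) by apply exp_pos.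
    rewrite (exp_Ropp r). fold x.
    destruct (exp_neg_bounds (a * x)) as [[_ Hup] [Hy _]]; [nra|].
    assert (0 < exp (- (a * x))) by apply exp_pos.
    replace (- exp (- (a * x)) / a - 0) with (- (exp (- (a * x)) / a)) by (field; lra).
    rewrite Rabs_Ropp, Rabs_pos_eq by (apply Rlt_le, Rdiv_lt_0_compat; lra).
    apply Rle_trans with (/ a ^ 2 * / x).
    + replace (/ a ^ 2 * / x) with (/ (a * x) / a) by (field; lra).
      apply Rmult_le_compat_r; [apply Rlt_le, Rinv_0_lt_compat; lra|].
      apply Rmult_le_reg_l with (a * x); [nra|]. rewrite Rinv_r by nra. lra.
    + assert (0 < / x) by (apply Rinv_0_lt_compat; lra). nra.
Qed.

Lemma is_RInt_line_moment2 (a : R) : 0 < a ->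
  is_RInt_line (fun r => exp r ^ 2 * exp (- (a * exp r))) (/ a ^ 2).
Proof.
  intros Ha.
  apply (is_RInt_line_ext (fun r => exp r ^ 2 * exp (- (a * exp r))) _ (0 - - / a ^ 2));
    [reflexivity | field; lra |].
  apply (is_RInt_line_primitive (fun r => - (exp r / a + / a ^ 2) * exp (- (a * exp r)))
    _ _ _ (/ a + 5 / a ^ 3)).
  - intros r. auto_derive; auto. field. lra.
  - intros r. apply continuous_of_ex_derive. auto_derive. auto.
  - intros r. set (x := exp r). assert (Hx : 0 < x) by apply exp_pos.
    destruct (exp_neg_bounds (a * x)) as [[Hlow Hup] _]; [nra|].
    set (E := exp (- (a * x))) in *. assert (0 < E) by apply exp_pos.
    replace (- (x / a + / a ^ 2) * E - - / a ^ 2) with ((1 - E) / a ^ 2 - x / a * E) by (field; lra).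
    assert (0 <= (1 - E) / a ^ 2 <= x / a).
    { split; [apply Rmult_le_pos; [lra | apply Rlt_le, Rinv_0_lt_compat, pow_lt; lra]|].
      apply Rle_div_l; [apply pow_lt; lra|]. replace (x / a * a ^ 2) with (a * x) by (field; lra). lra. }
    assert (0 <= x / a * E <= x / a) by (assert (0 < x / a) by (apply Rdiv_lt_0_compat; lra); split; nra).
    assert (x / a = / a * x) by (field; lra).
    assert (0 < 5 / a ^ 3 * x) by (apply Rmult_lt_0_compat; [apply Rdiv_lt_0_compat; [lra | apply pow_lt; lra]|lra]).
    apply Rabs_le; split; nra.
  - intros r. set (x := exp r). assert (Hx : 0 < x) by apply exp_pos.
    rewrite (exp_Ropp r). fold x.
    destruct (exp_neg_bounds (a * x)) as [_ [Hy Hy2]]; [nra|].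
    set (E := exp (- (a * x))) in *. assert (0 < E) by apply exp_pos.
    assert (Hnn : 0 <= (x / a + / a ^ 2) * E).
    { apply Rmult_le_pos; [|lra]. apply Rplus_le_le_0_compat;
        [apply Rlt_le, Rdiv_lt_0_compat | apply Rlt_le, Rinv_0_lt_compat, pow_lt]; lra. }
    rewrite Rminus_0_r, Ropp_mult_distr_l_reverse, Rabs_Ropp, Rabs_pos_eq by exact Hnn.
    apply Rmult_le_reg_l with (x * a ^ 3); [apply Rmult_lt_0_compat; [|apply pow_lt]; lra|].
    replace (x * a ^ 3 * ((x / a + / a ^ 2) * E)) with ((a * x) ^ 2 * E + a * x * E) by (field; lra).
    replace (x * a ^ 3 * ((/ a + 5 / a ^ 3) * / x)) with (a ^ 2 + 5) by (field; lra).
    assert (0 <= a ^ 2) by (apply pow_le; lra). lra.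
Qed.

(* sum_n_ext with the equations stated in R, so that ring and field apply. *)
Lemma sum_n_ext_R (a b : nat -> R) (N : nat) :
  (forall k, a k = b k) -> sum_n a N = sum_n b N.
Proof. apply (sum_n_ext (G:=R_AbelianMonoid)). Qed.

Lemma sum_n_scal_R (C : R) (a : nat -> R) (N : nat) :
  sum_n (fun k => C * a k) N = C * sum_n a N.
Proof.
  induction N as [|N IH]; [now rewrite !sum_O|].
  rewrite !sum_Sn, IH. unfold plus; simpl. ring.
Qed.

Lemma is_lim_seq_inv_shift (t : R) : is_lim_seq (fun n => / (INR n + t)) 0.
Proof.
  change (Finite 0) with (Rbar_inv p_infty).
  apply is_lim_seq_inv; [|discriminate].
  eapply is_lim_seq_plus; [apply is_lim_seq_INR | apply is_lim_seq_const | reflexivity].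
Qed.

Lemma is_series_telescoping (C : R) :
  is_series (fun k => C * (/ (INR k + 1) - / (INR k + 2))) C.
Proof.
  assert (Hsum : forall N, sum_n (fun k => C * (/ (INR k + 1) - / (INR k + 2))) N
                           = C * (1 - / (INR N + 2))).
  { induction N as [|N IH].
    - rewrite sum_O. simpl. field.
    - rewrite sum_Sn, IH, S_INR. pose proof (pos_INR N). unfold plus; simpl. field. lra. }
  assert (Hlim : is_lim_seq (sum_n (fun k => C * (/ (INR k + 1) - / (INR k + 2)))) C).
  2: exact Hlim.
  apply (is_lim_seq_ext (fun N => C * (1 - / (INR N + 2)))); [intros N; now rewrite Hsum|].
  assert (Hm : is_lim_seq (fun N => 1 - / (INR N + 2)) (1 - 0)).
  { apply (is_lim_seq_minus' _ _ 1 0); [apply is_lim_seq_const | apply is_lim_seq_inv_shift]. }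
  pose proof (is_lim_seq_scal_l _ C _ Hm) as H. simpl in H.
  now rewrite Rminus_0_r, Rmult_1_r in H.
Qed.

Lemma ex_series_le_telescoping (a : nat -> R) (C : R) :
  (forall k, Rabs (a k) <= C * (/ (INR k + 1) - / (INR k + 2))) -> ex_series a.
Proof.
  intros H. apply (ex_series_le (K:=R_AbsRing) (V:=R_CompleteNormedModule) a _ H).
  eexists; apply is_series_telescoping.
Qed.

Lemma ex_series_inv_sq (t : R) : 1 <= t -> ex_series (fun k => / (INR k + t) ^ 2).
Proof.
  intros Ht. apply (ex_series_le_telescoping _ 2). intros k. pose proof (pos_INR k).
  rewrite Rabs_pos_eq by (apply Rlt_le, Rinv_0_lt_compat; nra).
  replace (2 * (/ (INR k + 1) - / (INR k + 2))) with (/ ((INR k + 1) * (INR k + 2) / 2))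
    by (field; lra).
  apply Rinv_le_contravar; [apply Rdiv_lt_0_compat|]; nra.
Qed.

Definition log_partial (N : nat) (t : R) : R := sum_n (fun k => t ^ S k / INR (S k)) N.

Definition log_remainder (N : nat) (t : R) : R := - ln (1 - t) - log_partial N t.

Lemma log_partial_nonneg (N : nat) (t : R) : 0 <= t -> 0 <= log_partial N t.
Proof.
  intros Ht. assert (Hterm : forall k, 0 <= t ^ S k / INR (S k)).
  { intros k. apply Rmult_le_pos; [now apply pow_le | apply Rlt_le, Rinv_0_lt_compat, lt_0_INR; lia]. }
  unfold log_partial. induction N as [|N IH].
  - rewrite sum_O. apply Hterm.
  - rewrite sum_Sn. apply Rplus_le_le_0_compat; [exact IH | apply Hterm].
Qed.

Lemma log_remainder_0 (N : nat) : log_remainder N 0 = 0.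
Proof.
  unfold log_remainder, log_partial. rewrite Rminus_0_r, ln_1.
  assert (Hzero : forall k, 0 ^ S k / INR (S k) = 0)
    by (intros k; rewrite pow_ne_zero by lia; unfold Rdiv; ring).
  rewrite (sum_n_ext_R _ (fun _ => 0) N Hzero), sum_n_const. ring.
Qed.

Lemma is_derive_log_remainder (N : nat) (t : R) : t < 1 ->
  is_derive (log_remainder N) t (t ^ S N / (1 - t)).
Proof.
  intros Ht.
  assert (Hpartial : is_derive (log_partial N) t (sum_n (fun k => t ^ k) N)).
  { apply (is_derive_sum_n (fun k y => y ^ S k / INR (S k))). intros k _.
    auto_derive; auto.
    change (match k with 0%nat => 1 | S _ => INR k + 1 end) with (INR (S k)).
    field. apply not_0_INR; lia. }
  eapply is_derive_ext; [intros; reflexivity|].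
  replace (t ^ S N / (1 - t)) with (/ (1 - t) - sum_n (fun k => t ^ k) N).
  - apply (is_derive_minus (K:=R_AbsRing) (V:=R_NormedModule)); [|exact Hpartial].
    auto_derive; [lra | field; lra].
  - rewrite sum_n_Reals, tech3 by lra. field. lra.
Qed.

Lemma le_of_derive_nonneg (F f : R -> R) (a b : R) : a <= b ->
  (forall x, a <= x <= b -> is_derive F x (f x)) ->
  (forall x, a <= x <= b -> continuous f x) ->
  (forall x, a < x < b -> 0 <= f x) -> F a <= F b.
Proof.
  intros Hab Hd Hc Hpos.
  assert (HI : is_RInt f a b (minus (F b) (F a))).
  { apply (is_RInt_derive (V:=R_CompleteNormedModule));
      intros x Hx; rewrite Rmin_left, Rmax_right in Hx by lra; auto. }
  pose proof (RInt_ge_0 f a b Hab (ex_intro _ _ HI) Hpos) as H.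
  apply (is_RInt_unique (V:=R_CompleteNormedModule)) in HI. rewrite HI in H.
  unfold minus, plus, opp in H; simpl in H. lra.
Qed.

Lemma log_remainder_nonneg (N : nat) (u : R) : 0 <= u < 1 -> 0 <= log_remainder N u.
Proof.
  intros Hu. rewrite <- (log_remainder_0 N).
  apply (le_of_derive_nonneg _ (fun t => t ^ S N / (1 - t))); try lra.
  - intros; apply is_derive_log_remainder; lra.
  - intros x Hx. apply continuous_of_ex_derive. auto_derive. lra.
  - intros x Hx. apply Rmult_le_pos; [apply pow_le; lra | apply Rlt_le, Rinv_0_lt_compat; lra].
Qed.

(* Comparing derivatives on [0, u]: the remainder is at most
   u^(N+2) / ((N+2) (1-u)), hence (1 - u) R_N(u) <= 1/(N+2). *)
Lemma log_remainder_bound (N : nat) (u : R) : 0 <= u < 1 ->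
  (1 - u) * log_remainder N u <= / INR (S (S N)).
Proof.
  intros Hu. set (n := INR (S (S N))). assert (Hn : 0 < n) by (apply lt_0_INR; lia).
  assert (Hcmp : 0 ^ S (S N) / (n * (1 - u)) - log_remainder N 0
                 <= u ^ S (S N) / (n * (1 - u)) - log_remainder N u).
  { apply (le_of_derive_nonneg (fun t => t ^ S (S N) / (n * (1 - u)) - log_remainder N t)
       (fun t => n * t ^ S N / (n * (1 - u)) - t ^ S N / (1 - t))); try lra.
    - intros x Hx. apply (is_derive_minus (K:=R_AbsRing) (V:=R_NormedModule));
        [|apply is_derive_log_remainder; lra].
      auto_derive; auto.
      change (match N with 0%nat => 1 | S _ => INR N + 1 end + 1) with n.
      simpl. field. lra.
    - intros x Hx. apply continuous_of_ex_derive. auto_derive. lra.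
    - intros x Hx.
      replace (n * x ^ S N / (n * (1 - u)) - x ^ S N / (1 - x))
        with (x ^ S N * (/ (1 - u) - / (1 - x))) by (field; lra).
      apply Rmult_le_pos; [apply pow_le; lra|].
      assert (/ (1 - x) <= / (1 - u)) by (apply Rinv_le_contravar; lra). lra. }
  rewrite log_remainder_0 in Hcmp. simpl (0 ^ S (S N)) in Hcmp.
  replace (0 * (0 * 0 ^ N) / (n * (1 - u)) - 0) with 0 in Hcmp by (field; lra).
  assert (Hp : u ^ S (S N) <= 1) by (pose proof (pow_lt_1_compat u (S (S N)) Hu ltac:(lia)); lra).
  apply Rle_trans with ((1 - u) * (u ^ S (S N) / (n * (1 - u)))).
  - apply Rmult_le_compat_l; lra.
  - replace ((1 - u) * (u ^ S (S N) / (n * (1 - u)))) with (u ^ S (S N) * / n) by (field; lra).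
    rewrite <- (Rmult_1_l (/ n)) at 2. apply Rmult_le_compat_r; [apply Rlt_le, Rinv_0_lt_compat|]; lra.
Qed.

Lemma gq_factor (q r : R) :
  gq q r = exp (- exp r) * (1 - exp (- ((q - 1) * exp r))).
Proof.
  unfold gq. rewrite Rmult_minus_distr_l, Rmult_1_r, <- exp_plus. do 3 f_equal. ring.
Qed.

Lemma gq_pos (q r : R) : 1 < q -> 0 < gq q r.
Proof.
  intros Hq. unfold gq. apply Rlt_0_minus, exp_increasing.
  pose proof (exp_pos r). nra.
Qed.

Lemma exp_pow_INR (y : R) (m : nat) : exp y ^ m = exp (INR m * y).
Proof.
  induction m as [|m IH]; [simpl; now rewrite Rmult_0_l, exp_0|].
  rewrite S_INR. simpl. rewrite IH, <- exp_plus. f_equal. ring.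
Qed.

Lemma exp_affine_pow (x c : R) (m : nat) :
  exp (- ((1 + INR m * c) * x)) = exp (- x) * exp (- (c * x)) ^ m.
Proof. rewrite exp_pow_INR, <- exp_plus. f_equal. ring. Qed.

Lemma sum_n_geometric (C u : R) (N : nat) : u <> 1 ->
  sum_n (fun k => C * u ^ S k) N = C * u * (1 - u ^ S N) / (1 - u).
Proof.
  intros Hu. assert (1 - u <> 0) by (intro; apply Hu; lra).
  induction N as [|N IH].
  - rewrite sum_O. simpl. field. auto.
  - rewrite sum_Sn, IH. unfold plus; simpl. field. auto.
Qed.

Lemma continuous_rho_integrand (q x : R) : 1 < q -> continuous (rho_integrand q) x.
Proof.
  intros Hq. apply continuous_of_ex_derive. unfold rho_integrand.
  pose proof (gq_pos q x Hq). unfold gq in *. auto_derive. lra.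
Qed.

Definition rho_approx (q : R) (N : nat) (r : R) : R :=
  exp r ^ 2 * exp (- (1 * exp r)) + - q ^ 2 * (exp r ^ 2 * exp (- (q * exp r)))
  + sum_n (fun k => (q - 1) ^ 2 * (exp r ^ 2 * exp (- ((1 + INR (S k) * (q - 1)) * exp r)))) N.

Lemma continuous_rho_approx (q : R) (N : nat) (x : R) : continuous (rho_approx q N) x.
Proof.
  apply continuous_of_ex_derive. unfold rho_approx.
  apply (ex_derive_plus (K:=R_AbsRing) (V:=R_NormedModule)); [auto_derive; auto|].
  apply (ex_derive_sum_n (K:=R_AbsRing) (V:=R_NormedModule)). intros k _. auto_derive. auto.
Qed.

Lemma is_RInt_line_rho_approx (q : R) (N : nat) : 1 < q ->
  is_RInt_line (rho_approx q N) (sum_n (fun k => / (INR k + q / (q - 1)) ^ 2) N).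
Proof.
  intros Hq.
  eapply is_RInt_line_ext; [intros r; reflexivity| |].
  2: { apply is_RInt_line_plus;
         [apply is_RInt_line_plus; [apply is_RInt_line_moment2; lra|
                                    apply is_RInt_line_scal, is_RInt_line_moment2; lra]|].
       apply is_RInt_line_sum. intros k. apply is_RInt_line_scal, is_RInt_line_moment2.
       pose proof (pos_INR (S k)). nra. }
  replace (/ 1 ^ 2 + - q ^ 2 * / q ^ 2) with 0 by (field; lra). rewrite Rplus_0_l.
  apply sum_n_ext_R. intros k. rewrite S_INR. pose proof (pos_INR k). field. split; [lra | nra].
Qed.

Lemma rho_remainder_eq (q : R) (N : nat) (r : R) : 1 < q ->
  rho_integrand q r - rho_approx q N r =
  (q - 1) ^ 2 * exp r ^ 2 * exp (- exp r) * exp (- ((q - 1) * exp r)) ^ S (S N)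
    / (1 - exp (- ((q - 1) * exp r))).
Proof.
  intros Hq. unfold rho_integrand, rho_approx. rewrite gq_factor.
  assert (Hx : 0 < exp r) by apply exp_pos.
  assert (HE : 0 < exp (- exp r)) by apply exp_pos.
  assert (Hcx : 0 < (q - 1) * exp r) by (apply Rmult_lt_0_compat; lra).
  assert (Hu : exp (- ((q - 1) * exp r)) < 1)
    by (rewrite <- exp_0 at 2; apply exp_increasing; lra).
  assert (Eq : exp (- (q * exp r)) = exp (- exp r) * exp (- ((q - 1) * exp r)))
    by (rewrite <- exp_plus; f_equal; ring).
  rewrite Eq, Rmult_1_l.
  rewrite (sum_n_ext_R _ (fun k => ((q - 1) ^ 2 * exp r ^ 2 * exp (- exp r))
                                 * exp (- ((q - 1) * exp r)) ^ S k))
    by (intros k; rewrite exp_affine_pow; ring).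
  rewrite sum_n_geometric by lra.
  set (u := exp (- ((q - 1) * exp r))) in *. set (E := exp (- exp r)) in *.
  simpl. field. repeat split; apply Rgt_not_eq; try apply Rmult_lt_0_compat; lra.
Qed.

Lemma geometric_tail_bound (c x E u : R) (N : nat) :
  0 < c -> 0 < x -> 0 < E -> 0 < u -> u * (1 + c * x) <= 1 ->
  0 <= c ^ 2 * x ^ 2 * E * u ^ S (S N) / (1 - u) <= c * (x * (E * u ^ S N)).
Proof.
  intros Hc Hx HE Hu0 Hu1.
  assert (Hucx : 0 < u * (c * x)) by (repeat apply Rmult_lt_0_compat; lra).
  assert (Hu : u < 1) by lra.
  assert (HP : 0 < c * x * (E * u ^ S N))
    by (apply Rmult_lt_0_compat; [nra | apply Rmult_lt_0_compat; [|apply pow_lt]; lra]).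
  replace (c ^ 2 * x ^ 2 * E * u ^ S (S N) / (1 - u))
    with (c * x * (E * u ^ S N) * (c * x * u / (1 - u))) by (simpl; field; lra).
  assert (Hfrac : 0 <= c * x * u / (1 - u) <= 1).
  { split; [apply Rmult_le_pos; [nra | apply Rlt_le, Rinv_0_lt_compat; lra]|].
    apply Rle_div_l; lra. }
  replace (c * (x * (E * u ^ S N))) with (c * x * (E * u ^ S N)) by ring.
  split; nra.
Qed.

Lemma rho_remainder_bounds (q : R) (N : nat) (r : R) : 1 < q ->
  0 <= rho_integrand q r - rho_approx q N r <=
  (q - 1) * (exp r * exp (- ((1 + INR (S N) * (q - 1)) * exp r))).
Proof.
  intros Hq. rewrite rho_remainder_eq, exp_affine_pow by auto.
  apply geometric_tail_bound; try apply exp_pos; [lra|].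
  rewrite exp_Ropp. pose proof (exp_ineq1_le ((q - 1) * exp r)).
  pose proof (exp_pos ((q - 1) * exp r)).
  apply Rmult_le_reg_l with (exp ((q - 1) * exp r)); auto.
  rewrite <- Rmult_assoc, Rinv_r by lra. lra.
Qed.

Lemma is_RInt_line_rho (q : R) : 1 < q ->
  is_RInt_line (rho_integrand q) (Series (fun k => / (INR k + q / (q - 1)) ^ 2)).
Proof.
  intros Hq. set (c := q - 1). assert (Hc : 0 < c) by (unfold c; lra).
  apply (is_RInt_line_dominated_approx _ (rho_approx q)
    (fun N r => c * (exp r * exp (- ((1 + INR (S N) * c) * exp r))))
    (sum_n (fun k => / (INR k + q / c) ^ 2)) (fun N => c * / (1 + INR (S N) * c))).
  - intros x; now apply continuous_rho_integrand.
  - apply continuous_rho_approx.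
  - intros N x. apply continuous_of_ex_derive. auto_derive. auto.
  - intros N. now apply is_RInt_line_rho_approx.
  - intros N. apply is_RInt_line_scal, is_RInt_line_moment1. pose proof (pos_INR (S N)). nra.
  - intros N r. now apply rho_remainder_bounds.
  - apply Series_correct, ex_series_inv_sq.
    apply Rle_div_r; unfold c; lra.
  - apply (is_lim_seq_ext (fun N => / (INR N + (1 + / c)))).
    + intros N. rewrite S_INR. pose proof (pos_INR N).
      assert (0 < (INR N + 1) * c) by (apply Rmult_lt_0_compat; lra).
      field. split; apply Rgt_not_eq; lra.
    + apply is_lim_seq_inv_shift.
Qed.

Lemma ln2_bounds : / 2 < ln 2 /\ / ln 2 < 2.
Proof.
  pose proof ln_lt_2 as H. split; [exact H|].
  replace 2 with (/ / 2) at 2 by field. apply Rinv_lt_contravar; [|exact H].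
  apply Rmult_lt_0_compat; lra.
Qed.

Lemma continuous_phi_integrand (q x : R) : 1 < q -> continuous (phi_integrand q) x.
Proof.
  intros Hq. apply continuous_of_ex_derive. unfold phi_integrand, log2.
  pose proof (gq_pos q x Hq). unfold gq in *. auto_derive. lra.
Qed.

Lemma phi_integrand_eq (q r : R) : 1 < q ->
  phi_integrand q r = / ln 2 * (exp (- exp r) * (1 - exp (- ((q - 1) * exp r)))
                                * (exp r - ln (1 - exp (- ((q - 1) * exp r))))).
Proof.
  intros Hq. unfold phi_integrand, log2. rewrite gq_factor.
  assert (Hcx : 0 < (q - 1) * exp r) by (apply Rmult_lt_0_compat; [lra | apply exp_pos]).
  assert (Hu : exp (- ((q - 1) * exp r)) < 1) by (rewrite <- exp_0 at 2; apply exp_increasing; lra).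
  rewrite ln_mult, ln_exp by (try apply exp_pos; lra).
  pose proof ln2_bounds. field. lra.
Qed.

Definition phi_approx (q : R) (N : nat) (r : R) : R :=
  / ln 2 * (exp r * (exp (- exp r) - exp (- (q * exp r))) +
    sum_n (fun k => / INR (S k) * (exp (- ((1 + INR (S k) * (q - 1)) * exp r))
                                   - exp (- ((1 + INR (S (S k)) * (q - 1)) * exp r)))) N).

Lemma phi_approx_eq (q : R) (N : nat) (r : R) :
  phi_approx q N r = / ln 2 * (exp (- exp r) * (1 - exp (- ((q - 1) * exp r)))
                               * (exp r + log_partial N (exp (- ((q - 1) * exp r))))).
Proof.
  unfold phi_approx, log_partial.
  assert (Eq : exp (- (q * exp r)) = exp (- exp r) * exp (- ((q - 1) * exp r)))
    by (rewrite <- exp_plus; f_equal; ring).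
  rewrite Eq, (sum_n_ext_R _ (fun k => exp (- exp r) * (1 - exp (- ((q - 1) * exp r)))
      * (exp (- ((q - 1) * exp r)) ^ S k / INR (S k)))).
  - rewrite sum_n_scal_R. ring.
  - intros k. rewrite !exp_affine_pow. cbn [pow]. field. apply not_0_INR. lia.
Qed.

Lemma continuous_phi_approx (q : R) (N : nat) (x : R) : continuous (phi_approx q N) x.
Proof.
  apply continuous_of_ex_derive. unfold phi_approx.
  apply ex_derive_scal.
  apply (ex_derive_plus (K:=R_AbsRing) (V:=R_NormedModule)); [auto_derive; auto|].
  apply (ex_derive_sum_n (K:=R_AbsRing) (V:=R_NormedModule)). intros k _. auto_derive. auto.
Qed.

Definition phi_coeff (q : R) (k : nat) : R :=
  / (INR k + 1) * log2 ((INR k + 1 + / (q - 1) + 1) / (INR k + 1 + / (q - 1))).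

Lemma phi_coeff_eq (q : R) (k : nat) : 1 < q ->
  phi_coeff q k = / ln 2 * (/ INR (S k) *
    (ln (1 + INR (S (S k)) * (q - 1)) - ln (1 + INR (S k) * (q - 1)))).
Proof.
  intros Hq. unfold phi_coeff, log2. rewrite !S_INR. pose proof (pos_INR k).
  assert (0 < (INR k + 1) * (q - 1)) by (apply Rmult_lt_0_compat; lra).
  replace ((INR k + 1 + / (q - 1) + 1) / (INR k + 1 + / (q - 1))) with
    ((1 + (INR k + 1 + 1) * (q - 1)) / (1 + (INR k + 1) * (q - 1)))
    by (field; split; apply Rgt_not_eq; lra).
  rewrite ln_div by nra. pose proof ln2_bounds. field. lra.
Qed.

(* 0 <= phi_coeff q k <= 2/(k+1)^2, so the series of the statement converges. *)
Lemma ex_series_phi_coeff (q : R) : 1 < q -> ex_series (phi_coeff q).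
Proof.
  intros Hq. apply (ex_series_le_telescoping _ 4). intros k. rewrite phi_coeff_eq by auto.
  rewrite !S_INR. set (m := INR k + 1). set (c := q - 1).
  assert (Hm : 1 <= m) by (unfold m; pose proof (pos_INR k); lra).
  assert (Hc : 0 < c) by (unfold c; lra).
  replace (INR k + 2) with (m + 1) by (unfold m; ring).
  pose proof ln2_bounds as [_ Hln2]. assert (0 < / ln 2) by (apply Rinv_0_lt_compat; pose proof ln_lt_2; lra).
  assert (Hlog : ln (1 + (m + 1) * c) - ln (1 + m * c) = ln (1 + c / (1 + m * c))).
  { rewrite <- ln_div by nra. f_equal. field. nra. }
  rewrite Hlog.
  assert (Hd : 0 < c / (1 + m * c)) by (apply Rdiv_lt_0_compat; nra).
  assert (Hl0 : 0 <= ln (1 + c / (1 + m * c))) by (rewrite <- ln_1; left; apply ln_increasing; lra).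
  assert (Hl1 : ln (1 + c / (1 + m * c)) <= / m).
  { pose proof (exp_ineq1_le (ln (1 + c / (1 + m * c)))). rewrite exp_ln in H0 by lra.
    apply Rle_trans with (c / (1 + m * c)); [lra|].
    apply Rle_div_l; [nra|]. apply (Rmult_le_reg_l m); [lra|].
    rewrite <- Rmult_assoc, Rinv_r by lra. nra. }
  assert (0 < / m) by (apply Rinv_0_lt_compat; lra).
  rewrite Rabs_pos_eq by (repeat apply Rmult_le_pos; lra).
  apply Rle_trans with (2 * (/ m * / m)).
  { apply Rmult_le_compat; try lra; [repeat apply Rmult_le_pos; lra|]. apply Rmult_le_compat_l; lra. }
  replace (4 * (/ m - / (m + 1))) with (2 * (2 * / (m * (m + 1)))) by (field; lra).
  apply Rmult_le_compat_l; [lra|]. rewrite <- Rinv_mult.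
  replace (2 * / (m * (m + 1))) with (/ (m * (m + 1) / 2)) by (field; lra).
  apply Rinv_le_contravar; nra.
Qed.

Lemma is_RInt_line_phi_approx (q : R) (N : nat) : 1 < q ->
  is_RInt_line (phi_approx q N) ((1 - / q) / ln 2 + sum_n (phi_coeff q) N).
Proof.
  intros Hq.
  assert (Hmoment : is_RInt_line (fun r => exp r * (exp (- exp r) - exp (- (q * exp r)))) (1 - / q)).
  { apply (is_RInt_line_ext (fun r => exp r * exp (- (1 * exp r)) + - 1 * (exp r * exp (- (q * exp r))))
      _ (/ 1 + - 1 * / q)); [intros r; rewrite Rmult_1_l; ring | field; lra |].
    apply is_RInt_line_plus; [|apply is_RInt_line_scal]; apply is_RInt_line_moment1; lra. }
  apply (is_RInt_line_ext (phi_approx q N) _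
    (/ ln 2 * ((1 - / q) + sum_n (fun k => / INR (S k) *
      (ln (1 + INR (S (S k)) * (q - 1)) - ln (1 + INR (S k) * (q - 1)))) N))).
  - reflexivity.
  - rewrite (sum_n_ext_R (phi_coeff q) _ N (fun k => phi_coeff_eq q k Hq)).
    rewrite sum_n_scal_R. pose proof ln2_bounds. field. lra.
  - apply is_RInt_line_scal, is_RInt_line_plus; [exact Hmoment|].
    apply is_RInt_line_sum. intros k. apply is_RInt_line_scal, is_RInt_line_frullani.
    + pose proof (pos_INR (S k)). nra.
    + rewrite (S_INR (S k)). nra.
Qed.

(* The approximations increase to phi_integrand with uniform error 1/((N+2) ln 2):
   0 <= log_partial <= -ln (1 - u) and (1 - u) log_remainder <= 1/(N+2). *)
Lemma phi_approx_bounds (q : R) (N : nat) (r : R) : 1 < q ->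
  0 <= phi_approx q N r <= phi_integrand q r /\
  phi_integrand q r <= phi_approx q N r + / ln 2 * / INR (S (S N)).
Proof.
  intros Hq. rewrite phi_approx_eq, phi_integrand_eq by auto.
  assert (Hx : 0 < exp r) by apply exp_pos.
  assert (HE : 0 < exp (- exp r) <= 1) by (split; [apply exp_pos | apply exp_neg_bounds; lra]).
  assert (Hcx : 0 < (q - 1) * exp r) by (apply Rmult_lt_0_compat; lra).
  assert (Hu : 0 < exp (- ((q - 1) * exp r)) < 1)
    by (split; [apply exp_pos | rewrite <- exp_0 at 2; apply exp_increasing; lra]).
  pose proof ln2_bounds as [Hln2 _]. assert (Hinv : 0 < / ln 2) by (apply Rinv_0_lt_compat; lra).
  set (u := exp (- ((q - 1) * exp r))) in *. set (E := exp (- exp r)) in *.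
  set (x := exp r) in *.
  pose proof (log_partial_nonneg N u ltac:(lra)).
  pose proof (log_remainder_nonneg N u ltac:(lra)).
  pose proof (log_remainder_bound N u ltac:(lra)).
  unfold log_remainder in *.
  assert (HE1 : 0 < E * (1 - u)) by (apply Rmult_lt_0_compat; lra).
  split; [split|].
  - apply Rmult_le_pos; [lra|]. apply Rmult_le_pos; lra.
  - apply Rmult_le_compat_l; [lra|]. apply Rmult_le_compat_l; lra.
  - assert (Hn : 0 < / INR (S (S N))) by (apply Rinv_0_lt_compat, lt_0_INR; lia).
    assert (E * ((1 - u) * (- ln (1 - u) - log_partial N u)) <= / INR (S (S N))).
    { apply Rle_trans with (1 * ((1 - u) * (- ln (1 - u) - log_partial N u))).
      - apply Rmult_le_compat_r; [apply Rmult_le_pos|]; lra.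
      - lra. }
    rewrite <- Rmult_plus_distr_l. apply Rmult_le_compat_l; [lra|].
    replace (E * (1 - u) * (x - ln (1 - u)))
      with (E * (1 - u) * (x + log_partial N u) + E * ((1 - u) * (- ln (1 - u) - log_partial N u)))
      by ring.
    lra.
Qed.

Lemma is_RInt_line_phi (q : R) : 1 < q ->
  is_RInt_line (phi_integrand q) ((1 - / q) / ln 2 + Series (phi_coeff q)).
Proof.
  intros Hq.
  apply (is_RInt_line_monotone_approx _ (phi_approx q)
    (fun N => (1 - / q) / ln 2 + sum_n (phi_coeff q) N) (fun N => / ln 2 * / INR (S (S N)))).
  - intros x; now apply continuous_phi_integrand.
  - apply continuous_phi_approx.
  - intros N. now apply is_RInt_line_phi_approx.
  - intros N r. now apply phi_approx_bounds.
  - intros N r. now apply phi_approx_bounds.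
  - apply (is_lim_seq_plus' _ _ ((1 - / q) / ln 2) (Series (phi_coeff q))).
    + apply is_lim_seq_const.
    + apply Series_correct, ex_series_phi_coeff, Hq.
  - replace (Finite 0) with (Rbar_mult (/ ln 2) 0) by (simpl; now rewrite Rmult_0_r).
    apply is_lim_seq_scal_l.
    apply (is_lim_seq_ext (fun N => / (INR N + 2))); [intros N; now rewrite !S_INR, Rplus_assoc|].
    apply is_lim_seq_inv_shift.
Qed.

Lemma hurwitz_zeta_2 (t : R) : 0 < t ->
  hurwitz_zeta 2 t = Series (fun k => / (INR k + t) ^ 2).
Proof.
  intros Ht. unfold hurwitz_zeta. apply Series_ext. intros k.
  pose proof (pos_INR k). replace 2 with (INR 2) at 1 by (simpl; ring).
  now rewrite Rpower_pow by lra.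
Qed.

Theorem mainTheorem3 (q : R) (hq : 1 < q) :
  (exists S : R,
     is_series (fun k : nat =>
        / (INR k + 1) * log2 ((INR k + 1 + / (q - 1) + 1) / (INR k + 1 + / (q - 1)))) S /\
     is_RInt_gen (phi_integrand q) (Rbar_locally m_infty) (Rbar_locally p_infty)
       ((1 - / q) / ln 2 + S)) /\
  is_RInt_gen (rho_integrand q) (Rbar_locally m_infty) (Rbar_locally p_infty)
    (hurwitz_zeta 2 (q / (q - 1))) /\
  is_series (fun k : nat => / (INR k + q / (q - 1)) ^ 2) (hurwitz_zeta 2 (q / (q - 1))).
Proof.
  assert (Ht : 1 <= q / (q - 1)) by (apply Rle_div_r; lra).
  rewrite hurwitz_zeta_2 by lra.
  split; [|split].
  - exists (Series (phi_coeff q)). split.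
    + apply Series_correct, ex_series_phi_coeff, hq.
    + now apply is_RInt_line_phi.
  - now apply is_RInt_line_rho.
  - now apply Series_correct, ex_series_inv_sq.
Qed.
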